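(* Consider a single-stage screening process with two groups $A,B$ and a test satisfying $\tau_{X1}>\tau_{X0}\ge0$ for $X\in\{A,B\}$. The interview efficiency of any policy satisfying Equalized Odds (with positive true positive rate) is at most $$\frac{1}{1+\frac{u_A+u_B}{q_A+q_B}\cdot\max\left(\frac{\tau_{A0}}{\tau_{A1}},\frac{\tau_{B0}}{\tau_{B1}}\right)}.$$
   Context: Group $X$ has base rate $q_X$ and $u_X=1-q_X$; $\tau_{X1}$ (resp. $\tau_{X0}$) is the probability a qualified (resp. unqualified) member of $X$ passes the test. A policy specifies $\pi_{X1},\pi_{X0}\in[0,1]$, the promotion probabilities after passing (resp. failing). Let $M_X=\tau_{X1}\pi_{X1}+(1-\tau_{X1})\pi_{X0}$ and $N_X=\tau_{X0}\pi_{X1}+(1-\tau_{X0})\pi_{X0}$. The policy satisfies Equalized Odds if $M_A=M_B=:M$ and $N_A=N_B=:N$; its interview efficiency is then $\frac{(q_A+q_B)M}{(q_A+q_B)M+(u_A+u_B)N}$. *)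

From mathcomp Require Import all_boot all_order all_algebra.
Set Implicit Arguments. Unset Strict Implicit. Unset Printing Implicit Defensive.
Import Order.TTheory GRing.Theory Num.Theory.
Local Open Scope ring_scope.

(* Probability a qualified member (test pass prob tau1) is promoted:
   M_X = tau1 * pi1 + (1 - tau1) * pi0 *)
Definition promoM {R : numFieldType} (tau1 pi1 pi0 : R) : R :=
  tau1 * pi1 + (1 - tau1) * pi0.
(* Probability an unqualified member (test pass prob tau0) is promoted:
   N_X = tau0 * pi1 + (1 - tau0) * pi0 *)
Definition promoN {R : numFieldType} (tau0 pi1 pi0 : R) : R :=
  tau0 * pi1 + (1 - tau0) * pi0.

Definition efficiency {R : numFieldType} (qA qB M N : R) : R :=
  (qA + qB) * M / ((qA + qB) * M + ((1 - qA) + (1 - qB)) * N).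

Definition in01 {R : numFieldType} (x : R) : bool := (0 <= x) && (x <= 1).

From mathcomp Require Import all_boot all_order all_algebra.
From mathcomp Require Import ring.
Import Order.TTheory GRing.Theory Num.Theory.
Local Open Scope ring_scope.

(* Within one group, t1 * N - t0 * M = pi0 * (t1 - t0) >= 0, so the unqualified
   promotion rate is at least (tau0 / tau1) times the qualified one.  Equalized
   Odds makes both groups' bounds apply to the common rates (M, N), hence so does
   their maximum; and the efficiency S M / (S M + U N) decreases in N. *)

Lemma promoN_ge_ratio_promoM {R : numFieldType} (t1 t0 p1 p0 : R) :
  0 < t1 -> t0 <= t1 -> 0 <= p0 ->
  t0 / t1 * promoM t1 p1 p0 <= promoN t0 p1 p0.
Proof.
move=> t1_gt0 t01 p0_ge0.
rewrite mulrAC ler_pdivrMr // -subr_ge0.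
have -> : promoN t0 p1 p0 * t1 - t0 * promoM t1 p1 p0 = p0 * (t1 - t0).
  by rewrite /promoN /promoM; ring.
by rewrite mulr_ge0 // subr_ge0.
Qed.

Lemma efficiency_ratio_le {R : numFieldType} (S U M N m : R) :
  0 < S -> 0 <= U -> 0 < M -> 0 <= m -> m * M <= N ->
  S * M / (S * M + U * N) <= 1 / (1 + U / S * m).
Proof.
move=> S_gt0 U_ge0 M_gt0 m_ge0 mMN.
have SM_gt0 : 0 < S * M by rewrite mulr_gt0.
have UmM_ge0 : 0 <= U * (m * M) by rewrite !mulr_ge0 // ltW.
have D_gt0 : 0 < S + U * m by rewrite ltr_wpDr // mulr_ge0.
have -> : 1 / (1 + U / S * m) = S * M / (S * M + U * (m * M)).
  by field; rewrite !gt_eqF // ltr_wpDr.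
have UN_ge0 : 0 <= U * N by rewrite mulr_ge0 // (le_trans _ mMN) // mulr_ge0 // ltW.
apply: ler_wpM2l; first exact: ltW.
rewrite lef_pV2 ?posrE ?ltr_wpDr // lerD2l.
exact: ler_wpM2l.
Qed.

Theorem mainTheorem17 (R : realFieldType)
  (qA qB tauA1 tauA0 tauB1 tauB0 piA1 piA0 piB1 piB0 : R) :
  in01 qA -> in01 qB -> 0 < qA + qB ->
  in01 tauA1 -> in01 tauA0 -> in01 tauB1 -> in01 tauB0 ->
  0 <= tauA0 -> tauA0 < tauA1 -> 0 <= tauB0 -> tauB0 < tauB1 ->
  in01 piA1 -> in01 piA0 -> in01 piB1 -> in01 piB0 ->
  (* Equalized Odds *)
  promoM tauA1 piA1 piA0 = promoM tauB1 piB1 piB0 ->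
  promoN tauA0 piA1 piA0 = promoN tauB0 piB1 piB0 ->
  (* positive true positive rate *)
  0 < promoM tauA1 piA1 piA0 ->
  efficiency qA qB (promoM tauA1 piA1 piA0) (promoN tauA0 piA1 piA0)
  <= 1 / (1 + ((1 - qA) + (1 - qB)) / (qA + qB)
                * Num.max (tauA0 / tauA1) (tauB0 / tauB1)).
Proof.
move=> /andP[_ qA_le1] /andP[_ qB_le1] S_gt0 _ _ _ _ tauA0_ge0 tauA01 tauB0_ge0 tauB01
  _ /andP[piA0_ge0 _] _ /andP[piB0_ge0 _] eqM eqN M_gt0.
have tauA1_gt0 : 0 < tauA1 by apply: le_lt_trans tauA01.
have tauB1_gt0 : 0 < tauB1 by apply: le_lt_trans tauB01.
have boundA := promoN_ge_ratio_promoM _ _ piA1 _ tauA1_gt0 (ltW tauA01) piA0_ge0.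
have boundB := promoN_ge_ratio_promoM _ _ piB1 _ tauB1_gt0 (ltW tauB01) piB0_ge0.
rewrite -eqM -eqN in boundB.
apply: efficiency_ratio_le => //.
- by rewrite addr_ge0 // subr_ge0.
- by rewrite le_max divr_ge0 // ltW.
- by rewrite maxr_pMl ?ge_max ?boundA ?boundB // ltW.
Qed.
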